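(* Let $q>1$ and $n>1$ be integers and let $S$ be a special orientable sequence of order $n$ over $\mathbb{Z}_q$ (an $\mathcal{SOS}_q(n)$). Then the period of $S$ is at most \[ \frac{q^n-q^{(n+1)/2}-q^{(n-1)/2}+1}{2} \text{ if $q$ and $n$ are both odd;}\qquad \frac{q^n-2q^{n/2}+1}{2} \text{ if $q$ is odd and $n$ is even;} \] \[ \frac{q^n-q^{(n+1)/2}-2q^{(n-1)/2}+2^{(n+3)/2}-2^{(n+1)/2}}{2} \text{ if $q$ is even and $n$ is odd;}\qquad \frac{q^n-2q^{n/2}+2^{(n+2)/2}-2^{n/2}}{2} \text{ if $q$ and $n$ are both even.} \]
   Context: For a periodic sequence $S=(s_i)$ over $\mathbb{Z}_q$ write $\mathbf{s}_n(i)=(s_i,s_{i+1},\ldots,s_{i+n-1})$. For an $n$-tuple $\mathbf{u}=(u_0,\ldots,u_{n-1})$, its reverse is $\mathbf{u}^R=(u_{n-1},\ldots,u_0)$ and its negative is $-\mathbf{u}=(-u_0,\ldots,-u_{n-1})$. A $q$-ary $n$-window sequence is a periodic sequence over $\mathbb{Z}_q$ of period $m$ such that $\mathbf{s}_n(i)=\mathbf{s}_n(j)$ implies $i\equiv j\pmod m$. It is an orientable sequence of order $n$ ($\mathcal{OS}_q(n)$) if moreover $\mathbf{s}_n(i)\neq\mathbf{s}_n(j)^R$ for all $i,j$; negative orientable ($\mathcal{NOS}_q(n)$) if $\mathbf{s}_n(i)\neq-\mathbf{s}_n(j)^R$ for all $i,j$; and special orientable ($\mathcal{SOS}_q(n)$)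 if it is both orientable and negative orientable. *)

From mathcomp Require Import all_boot all_order all_algebra.
Set Implicit Arguments. Unset Strict Implicit. Unset Printing Implicit Defensive.
Import GRing.Theory Num.Theory.
Local Open Scope ring_scope.

Definition periodic (q : nat) (s : nat -> 'Z_q) (m : nat) : Prop :=
  (0 < m)%N /\ forall i, s (i + m)%N = s i.

Definition window (q : nat) (s : nat -> 'Z_q) (n i : nat) : seq 'Z_q :=
  [seq s (i + k)%N | k <- iota 0 n].

Definition negseq (q : nat) (u : seq 'Z_q) : seq 'Z_q := map (fun x => - x) u.

Definition n_window (q : nat) (s : nat -> 'Z_q) (n m : nat) : Prop :=
  periodic s m /\
  forall i j, window s n i = window s n j -> i = j %[mod m].

Definition orientable (q : nat) (s : nat -> 'Z_q) (n m : nat) : Prop :=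
  n_window s n m /\ forall i j, window s n i <> rev (window s n j).

Definition neg_orientable (q : nat) (s : nat -> 'Z_q) (n m : nat) : Prop :=
  n_window s n m /\ forall i j, window s n i <> negseq (rev (window s n j)).

Definition special_orientable (q : nat) (s : nat -> 'Z_q) (n m : nat) : Prop :=
  orientable s n m /\ neg_orientable s n m.

(* Twice the upper bound of the theorem, as an integer. *)
Definition sos_bound2 (q n : nat) : int :=
  let Q : int := q%:Z in
  if odd q then
    if odd n then Q ^+ n - Q ^+ ((n + 1) %/ 2) - Q ^+ ((n - 1) %/ 2) + 1
    else Q ^+ n - 2 * Q ^+ (n %/ 2) + 1
  else
    if odd n then Q ^+ n - Q ^+ ((n + 1) %/ 2) - 2 * Q ^+ ((n - 1) %/ 2)
                  + 2 ^+ ((n + 3) %/ 2) - 2 ^+ ((n + 1) %/ 2)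
    else Q ^+ n - 2 * Q ^+ (n %/ 2) + 2 ^+ ((n + 2) %/ 2) - 2 ^+ (n %/ 2).

From mathcomp Require Import all_boot all_order all_algebra zify.
Import GRing.Theory.
Set Implicit Arguments. Unset Strict Implicit. Unset Printing Implicit Defensive.

(* The m windows of S and their m reversals are 2m distinct n-tuples, none of
   which is a palindrome (u^R = u) or an antipalindrome (-u^R = u); hence
   2m <= q^n - |P :|: A|.  For an involution f, a tuple fixed by u |-> f(u^R)
   is freely determined by its first floor(n/2) entries together with, for odd
   n, an f-fixed middle entry.  So |P| >= q^ceil(n/2) and
   |A| >= q^floor(n/2) t^(n mod 2), where t (1 for odd q, 2 for even q) is the
   number of solutions of 2z = 0 in Z_q; and P :&: A consists of palindromes
   with entries among these solutions, so |P :&: A| <= t^ceil(n/2). *)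

Section RevFixedTuples.
Variables (T : finType) (f : T -> T).

Definition rev_fixed n : {set n.-tuple T} :=
  [set u : n.-tuple T | map f (rev u) == u].

Lemma tnth_rev_fixed n (u : n.-tuple T) (i : 'I_n) :
  u \in rev_fixed n -> tnth u i = f (tnth u (rev_ord i)).
Proof.
rewrite inE => /eqP fu; pose x0 := tnth u i.
by rewrite !(tnth_nth x0) -{1}fu (nth_map x0) ?nth_rev ?size_rev ?size_tuple.
Qed.

Lemma card_rev_fixed_on_le n (B : {pred T}) :
  #|[set u in rev_fixed n | all (mem B) u]| <= #|B| ^ uphalf n.
Proof.
have le_h_n : uphalf n <= n by lia.
pose half (u : n.-tuple T) := [ffun i => tnth u (widen_ord le_h_n i)].
have half_inj : {in [set u in rev_fixed n | all (mem B) u] &, injective half}.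
  move=> u v /setIdP [fu _] /setIdP [fv _] huv.
  have eq_half (j : 'I_n) : j < uphalf n -> tnth u j = tnth v j.
    move=> hj; have /ffunP/(_ (Ordinal hj)) := huv; rewrite !ffunE.
    by have -> : widen_ord le_h_n (Ordinal hj) = j by apply: val_inj.
  apply: eq_from_tnth => i; have [hi | hi] := ltnP i (uphalf n); first exact: eq_half.
  rewrite (tnth_rev_fixed i fu) (tnth_rev_fixed i fv) eq_half //=.
  by move: hi (ltn_ord i); lia.
rewrite -(card_in_imset half_inj) -[in X in _ <= X](card_ord (uphalf n)) -card_ffun_on.
apply/subset_leq_card/subsetP => _ /imsetP [u /setIdP [_ /all_tnthP uB] ->].
by apply/ffun_onP => i; rewrite ffunE; apply: uB.
Qed.

Hypothesis fK : involutive f.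

Lemma rev_fixed_rev n : {mono (@rev_tuple n T) : u / u \in rev_fixed n}.
Proof. by move=> u; rewrite !inE /= revK -(inj_eq (can_inj revK)) map_rev revK. Qed.

Lemma card_rev_fixed_ge n :
  #|T| ^ n./2 * #|[pred x | f x == x]| ^ odd n <= #|rev_fixed n|.
Proof.
have size_sym : n./2 + (odd n + n./2) = n by lia.
pose sym (p : (n./2).-tuple T * (odd n).-tuple {x | f x == x}) :=
  tcast size_sym [tuple of p.1 ++ map val p.2 ++ map f (rev p.1)].
have sym_inj : injective sym.
  move=> [a b] [a' b'] /(congr1 val); rewrite /sym /= !val_tcast.
  move=> /eqP; rewrite eqseq_cat ?size_tuple // => /andP [/eqP eq_a].
  rewrite eqseq_cat ?size_map ?size_tuple // => /andP [/eqP eq_b _].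
  by congr pair; apply: val_inj; [exact: eq_a | exact: (inj_map val_inj eq_b)].
rewrite -card_sig -!card_tuple -card_prod -cardsT -(card_imset _ sym_inj).
apply/subset_leq_card/subsetP => _ /imsetP [[a b] _ ->].
rewrite inE val_tcast /= !rev_cat -map_rev revK !map_cat (mapK fK).
have -> : map f (rev (map val b)) = map val b.
  case: b => [[|x [|y c]] //= /eqP sz]; last by rewrite /= in sz; lia.
  by rewrite /= (eqP (valP x)).
by rewrite catA.
Qed.

End RevFixedTuples.

Lemma setI_rev_fixed_id_sub (T : finType) (f : T -> T) n :
  rev_fixed id n :&: rev_fixed f n \subset
  [set u in rev_fixed id n | all [pred x | f x == x] u].
Proof.
apply/subsetP => u /setIP [pal_u fix_u]; rewrite inE pal_u /=.
move: pal_u fix_u; rewrite !inE map_id => /eqP ->.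
by elim: (tval u) => //= x l IH /eqP [-> /eqP /IH ->]; rewrite eqxx.
Qed.

Lemma card_palindromes_ge (T : finType) n : #|T| ^ uphalf n <= #|rev_fixed (@id T) n|.
Proof.
have := @card_rev_fixed_ge T id (fun _ => erefl) n.
rewrite (@eq_card _ [pred x : T | id x == x] T) => [|x]; last by rewrite !inE eqxx.
by rewrite -expnD addnC -uphalf_half.
Qed.

Lemma card_rev_disjoint_le (T : finType) n (W F : {set n.-tuple T}) :
  {mono (@rev_tuple n T) : u / u \in F} ->
  [disjoint W & [set rev_tuple u | u in W]] -> [disjoint W & F] ->
  #|W|.*2 + #|F| <= #|T| ^ n.
Proof.
move=> F_rev dis_W_revW dis_W_F.
have rev_inj : injective (@rev_tuple n T).
  by move=> u v /(congr1 val) /(can_inj revK) /val_inj.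
have dis_revW_F : [disjoint [set rev_tuple u | u in W] & F].
  rewrite disjoint_subset; apply/subsetP => _ /imsetP [u uW ->].
  by rewrite !inE F_rev (disjointFr dis_W_F uW).
have dis_WrevW_F : [disjoint W :|: [set rev_tuple u | u in W] & F].
  by rewrite -setI_eq0 setIUl setU_eq0 !setI_eq0 dis_W_F dis_revW_F.
have card_disjU (A B : {set n.-tuple T}) : [disjoint A & B] -> #|A :|: B| = #|A| + #|B|.
  by move=> dis_AB; apply/eqP; rewrite (eq_leqif (leq_card_setU A B)).
rewrite -card_tuple -addnn -{2}(card_imset W rev_inj).
rewrite -card_disjU // -card_disjU //.
exact: max_card.
Qed.

Lemma card_rev_disjoint_rev_fixed_le (T : finType) (f : T -> T) n (W : {set n.-tuple T}) :
  involutive f ->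
  [disjoint W & [set rev_tuple u | u in W]] ->
  [disjoint W & rev_fixed id n :|: rev_fixed f n] ->
  #|W|.*2 + #|T| ^ uphalf n + #|T| ^ n./2 * #|[pred x | f x == x]| ^ odd n <=
  #|T| ^ n + #|[pred x | f x == x]| ^ uphalf n.
Proof.
move=> fK dis_W_revW dis_W_PA.
have PA_rev : {mono (@rev_tuple n T) : u / u \in rev_fixed id n :|: rev_fixed f n}.
  by move=> u; rewrite !in_setU !rev_fixed_rev.
have card_PiA := leq_trans (subset_leq_card (setI_rev_fixed_id_sub f n))
  (card_rev_fixed_on_le id n [pred x | f x == x]).
have := leq_add (card_rev_disjoint_le PA_rev dis_W_revW dis_W_PA) card_PiA.
rewrite -addnA cardsUI => /(leq_trans _); apply; rewrite -addnA leq_add2l.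
exact: leq_add (card_palindromes_ge T n) (card_rev_fixed_ge fK n).
Qed.

Section TwoTorsion.
Variable q : nat.
Hypothesis q_gt1 : 1 < q.

Lemma card_Zp_ord : #|'Z_q| = q.
Proof. by rewrite card_ord Zp_cast. Qed.

Lemma Zp_oppr_fixedE (z : 'Z_q) : (- z == z)%R = (val z == 0) || ((val z).*2 == q).
Proof.
rewrite eq_sym -addr_eq0 -val_eqE /=.
case: z => v /=; rewrite Zp_cast // => lt_v_q.
have [lt_vv_q | le_q_vv] := ltnP (v + v) q; first by rewrite modn_small //; lia.
by rewrite -(subnK le_q_vv) modnDr modn_small; lia.
Qed.

Lemma card_Zp_oppr_fixed : #|[pred z : 'Z_q | (- z == z)%R]| = if odd q then 1 else 2.
Proof.
have val0 : val (0%R : 'Z_q) = 0 by [].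
case: ifP => odd_q.
  rewrite -(card1 (0%R : 'Z_q)); apply: eq_card => z.
  by rewrite !inE Zp_oppr_fixedE -val_eqE val0; case: eqP => //= _; lia.
have lt_half_q : q./2 < (Zp_trunc q).+2 by rewrite Zp_cast //; lia.
pose h : 'Z_q := Ordinal lt_half_q.
transitivity #|pred2 0%R h|; last by rewrite card2 -val_eqE /=; case: eqP => //; lia.
apply: eq_card => z.
by rewrite !inE Zp_oppr_fixedE -!val_eqE val0 /=; case: eqP => //= _; lia.
Qed.
End TwoTorsion.

Lemma size_window q (s : nat -> 'Z_q) n i : size (window s n i) == n.
Proof. by rewrite size_map size_iota. Qed.

Definition window_tuple q (s : nat -> 'Z_q) n i : n.-tuple 'Z_q :=
  Tuple (size_window s n i).

Definition windows q (s : nat -> 'Z_q) n m : {set n.-tuple 'Z_q} :=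
  [set window_tuple s n i | i : 'I_m].

Section Windows.
Variables (q n m : nat) (s : nat -> 'Z_q).

Lemma card_windows : n_window s n m -> #|windows s n m| = m.
Proof.
move=> [_ window_inj]; rewrite card_imset ?card_ord // => i j /(congr1 val) /= eq_ij.
by apply/val_inj; have := window_inj i j eq_ij; rewrite !modn_small.
Qed.

Lemma windows_disjoint_rev :
  orientable s n m -> [disjoint windows s n m & [set rev_tuple u | u in windows s n m]].
Proof.
move=> [_ not_rev]; rewrite disjoint_subset; apply/subsetP => _ /imsetP [i _ ->].
rewrite inE; apply/imsetP => -[_ /imsetP [j _ ->] /(congr1 val) /= eq_ij].
exact: (not_rev i j eq_ij).
Qed.

Lemma windows_disjoint_rev_fixed (f : 'Z_q -> 'Z_q) :
  (forall i, window s n i <> map f (rev (window s n i))) ->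
  [disjoint windows s n m & rev_fixed f n].
Proof.
move=> not_fixed; rewrite disjoint_subset; apply/subsetP => _ /imsetP [i _ ->].
by rewrite !inE; apply/eqP => /esym; apply: not_fixed.
Qed.

End Windows.

Local Open Scope ring_scope.

Lemma special_orientable_windows_disjoint q n m (s : nat -> 'Z_q) :
  special_orientable s n m ->
  [disjoint windows s n m & rev_fixed id n :|: rev_fixed -%R n].
Proof.
move=> [[_ not_rev] [_ not_neg_rev]].
rewrite -setI_eq0 setIUr setU_eq0 !setI_eq0.
apply/andP; split; apply: windows_disjoint_rev_fixed => i.
  by rewrite map_id; apply: not_rev.
exact: not_neg_rev.
Qed.

Lemma sos_bound2E q n : let x := (if odd q then 1 else 2)%N in
  sos_bound2 q n = (q ^ n + x ^ uphalf n)%N%:Z - (q ^ uphalf n + q ^ n./2 * x ^ odd n)%N%:Z.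
Proof.
have PoszX (a b : nat) : a%:Z ^+ b = (a ^ b)%N%:Z by rewrite -!natz natrX.
rewrite /sos_bound2 !PoszX -[(1 + 1)%N]/2%N.
case: (odd q); case odd_n: (odd n).
- have -> : ((n + 1) %/ 2 = uphalf n)%N by lia.
  have -> : ((n - 1) %/ 2 = n./2)%N by lia.
  rewrite !exp1n; lia.
- have -> : (n %/ 2 = uphalf n)%N by lia.
  have -> : (n./2 = uphalf n)%N by lia.
  rewrite !exp1n; lia.
- have -> : ((n + 1) %/ 2 = uphalf n)%N by lia.
  have -> : ((n - 1) %/ 2 = n./2)%N by lia.
  have -> : ((n + 3) %/ 2 = (uphalf n).+1)%N by lia.
  rewrite expnS expn1; lia.
- have -> : (n %/ 2 = uphalf n)%N by lia.
  have -> : (n./2 = uphalf n)%N by lia.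
  have -> : ((n + 2) %/ 2 = (uphalf n).+1)%N by lia.
  rewrite expnS expn0; lia.
Qed.

Theorem theorem2p1 (q n m : nat) (s : nat -> 'Z_q) :
  (1 < q)%N -> (1 < n)%N -> special_orientable s n m ->
  (2 * m)%:Z <= sos_bound2 q n.
Proof.
(* The bound holds without the hypothesis 1 < n. *)
move=> q_gt1 _ sos.
have := card_rev_disjoint_rev_fixed_le (@opprK _) (windows_disjoint_rev sos.1)
  (special_orientable_windows_disjoint sos).
rewrite card_windows; last exact: sos.1.1.
rewrite card_Zp_ord // card_Zp_oppr_fixed // sos_bound2E; lia.
Qed.
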